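(* Let $\epsilon>0$ and let $G=(S,B,E)$ be a bipartite graph with weights $w:S\to\mathbb{R}_+$ and a fixed arrival order of $B$. Run $\epsilon$-\textsc{Ranking} with independent uniform samples $x_j\in[0,1]$, $j\in S$. Then for every edge $\{i,j\}\in E$ with $i\in B$, $j\in S$, \[ \mathbb{E}[r_j+u_i]\ge\left(1-\frac{1}{e}-\epsilon\right)w_j. \]
   Context: $\epsilon$-\textsc{Ranking}: for each $j\in S$ sample independently a uniformly random $x_j\in[0,1]$; when buyer $i$ arrives (revealing $N(i)\subseteq S$), match $i$ to an unmatched $j\in N(i)$ maximizing $w_j(1-e^{x_j-1-\epsilon})$ (leave $i$ unmatched if none exists). Revenue: $r_j=w_je^{x_j-1-\epsilon}$ if $j$ is matched at the end, and $r_j=0$ otherwise. Utility: $u_i=w_j(1-e^{x_j-1-\epsilon})$ if buyer $i$ is matched to $j$, and $u_i=0$ if $i$ is unmatched. *)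

From HB Require Import structures.
From mathcomp Require Import all_boot all_order all_algebra.
From mathcomp Require Import all_classical all_reals all_analysis.
Set Implicit Arguments. Unset Strict Implicit. Unset Printing Implicit Defensive.
Import Order.TTheory GRing.Theory Num.Theory.
Local Open Scope ring_scope.
Local Open Scope classical_set_scope.

(* epsilon-Ranking on a bipartite graph with item side S (finType) and buyer
   side 'I_n (buyers arrive in the order 0, 1, ..., n-1). *)

Section Ranking.
Variables (R : realType) (S : finType) (n : nat).
Variables (E : 'I_n -> S -> bool) (w : S -> R) (eps : R) (x : S -> R).

Definition rk_val (j : S) : R := w j * (1 - expR (x j - 1 - eps)).

(* a maximizer of rk_val in s; ties broken in favour of the earliest in s *)
Definition rk_best (s : seq S) : option S :=
  foldl (fun best j => match best with
                       | None => Some j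
                       | Some b => if rk_val b < rk_val j then Some j else Some b
                       end) None s.

(* state: (set of matched items, assignment of buyers) *)
Definition rk_step (st : {set S} * ('I_n -> option S)) (i : 'I_n)
  : {set S} * ('I_n -> option S) :=
  let avail := [seq j <- enum S | E i j && (j \notin st.1)] in
  match rk_best avail with
  | None => st
  | Some j => (finset.setU [set j] st.1, fun b => if b == i then Some j else st.2 b)
  end.

Definition rk_run : {set S} * ('I_n -> option S) :=
  foldl rk_step (finset.set0, fun _ => None) (enum 'I_n).

Definition rk_rev (j : S) : R :=
  if j \in rk_run.1 then w j * expR (x j - 1 - eps) else 0.

Definition rk_util (i : 'I_n) : R :=
  match rk_run.2 i with
  | Some j => rk_val j
  | None => 0
  end.

End Ranking.

(* Expectation over independent uniform x_j in [0,1], j ranging over the list l,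
   as iterated Lebesgue integrals (the remaining coordinates fixed from x0). *)
Fixpoint iter_unif_exp (R : realType) (S : eqType) (l : seq S)
   (f : (S -> R) -> R) (x0 : S -> R) {struct l} : \bar R :=
  match l with
  | [::] => (f x0)%:E
  | j :: l' => (\int[@lebesgue_measure R]_(t in `[0%R, 1%R])
                 iter_unif_exp l' f (fun k => if k == j then t else x0 k))%E
  end.

Definition unif_exp (R : realType) (S : finType) (f : (S -> R) -> R) : \bar R :=
  iter_unif_exp (enum S) f (fun _ => 0).

From HB Require Import structures.
From mathcomp Require Import all_boot all_order all_algebra.
From mathcomp Require Import all_classical all_reals all_analysis.
From mathcomp Require Import measurable_realfun lebesgue_integral_fubini ring lra.
Import Order.TTheory GRing.Theory Num.Theory.
Set Implicit Arguments. Unset Strict Implicit. Unset Printing Implicit Defensive.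
Local Open Scope ring_scope.

(* Fix the ranks of all items other than [j] and let [u] be the utility that
   buyer [i] gets when [j] is deleted from the graph; [u] does not depend on
   [x_j].  Deleting [j] changes the set of matched items by exchanging [j] for
   at most one other item, so in the full run buyer [i] still gets at least
   [u], and [j] is sold as soon as its value [w_j (1 - e^(x_j-1-eps))] to [i]
   exceeds [u].  Hence [r_j + u_i >= u + w_j e^(x_j-1-eps) [x_j < theta]] for a
   threshold [theta] determined by [u]; integrating over [x_j] and minimising
   over [u] gives [(1 - 1/e - eps) w_j].  Fubini-Tonelli moves the integral
   over [x_j] innermost. *)

Section Argmax.
Local Open Scope order_scope.
Context {disp : Order.disp_t} {O : orderType disp} {T : eqType} (v : T -> O).

Definition argmax_step (o : option T) (k : T) : option T :=
  match o with None => Some k | Some b => if v b < v k then Some k else Some b end.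

Definition argmax (s : seq T) : option T := foldl argmax_step None s.

Lemma foldl_argmax_step_some b s : exists c, foldl argmax_step (Some b) s = Some c.
Proof.
elim: s b => [|k s IH] b /=; first by exists b.
by case: ifP => _; apply: IH.
Qed.

Lemma foldl_argmax_step_mem o s b :
  foldl argmax_step o s = Some b -> o = Some b \/ b \in s.
Proof.
elim: s o => [|k s IH] o /=; first by left.
move=> /IH [ho|bs]; last by right; rewrite inE bs orbT.
case: o ho => [c|] /=; last by move=> [<-]; right; rewrite inE eqxx.
by case: ifP => _ [<-]; [right; rewrite inE eqxx | left].
Qed.

Lemma argmax_eq_None s : (argmax s == None) = (s == [::]).
Proof.
case: s => [|k s] //=; rewrite /argmax /=.
by have [c ->] := foldl_argmax_step_some k s.
Qed.

Lemma argmaxP s b : reflect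
  (exists s1 s2, [/\ s = s1 ++ b :: s2, all (fun k => v k < v b) s1
                   & all (fun k => v k <= v b) s2])
  (argmax s == Some b).
Proof.
apply: (iffP eqP) => [|[s1 [s2 [-> lt1 le2]]]].
  elim/last_ind: s b => [|s k IH] b //; rewrite /argmax foldl_rcons.
  case hs: (foldl _ None s) => [c|] /=; last first.
    by move: hs (argmax_eq_None s) => /eqP-> /esym/eqP-> [<-]; exists [::], [::].
  have [s1 [s2 [-> lt1 le2]]] := IH c hs.
  have vc : all (fun k' => v k' <= v c) (s1 ++ c :: s2).
    rewrite all_cat /= lexx le2 !andbT; apply/allP => k' /(allP lt1); exact: ltW.
  case: ifP => ck [<-].
    exists (s1 ++ c :: s2), [::]; rewrite cats1; split => //.
    by apply/allP => k' /(allP vc) /le_lt_trans; apply.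
  exists s1, (rcons s2 k); rewrite rcons_cat; split => //.
  by rewrite all_rcons le2 andbT leNgt ck.
rewrite /argmax foldl_cat /= -/(argmax s1).
have -> : argmax_step (argmax s1) b = Some b.
  case h1: (argmax s1) => [c|] //=.
  have [//|c1] := foldl_argmax_step_mem h1.
  by rewrite (allP lt1 c c1).
elim: s2 le2 => [|k s2 IH] //= /andP[kb /IH].
by rewrite ltNge kb.
Qed.

Lemma argmax_mem s b : argmax s = Some b -> b \in s.
Proof. by move/eqP/argmaxP => [s1 [s2 [-> _ _]]]; rewrite mem_cat inE eqxx orbT. Qed.

Lemma argmax_max s b : argmax s = Some b -> {in s, forall k, v k <= v b}.
Proof.
move/eqP/argmaxP => [s1 [s2 [-> lt1 le2]]] k.
rewrite mem_cat inE => /or3P[/(allP lt1)/ltW | /eqP-> | /(allP le2)] //.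
Qed.

Lemma argmax_filter (P : pred T) s b :
  argmax s = Some b -> P b -> argmax [seq k <- s | P k] = Some b.
Proof.
move/eqP/argmaxP => [s1 [s2 [-> lt1 le2]]] Pb; apply/eqP/argmaxP.
exists [seq k <- s1 | P k], [seq k <- s2 | P k]; rewrite filter_cat /= Pb.
by split; rewrite // all_filter;
  [apply: sub_all lt1 | apply: sub_all le2] => k /= ->; rewrite implybT.
Qed.

End Argmax.

Lemma eq_in_argmax {disp : Order.disp_t} {O : orderType disp} {T : eqType}
    (v v' : T -> O) s :
  {in s, v =1 v'} -> argmax v s = argmax v' s.
Proof.
move=> vv'; case hs: (argmax v s) => [b|]; last first.
  by apply/esym/eqP; rewrite argmax_eq_None -(argmax_eq_None v) hs.
move/eqP/argmaxP: hs => [s1 [s2 [def_s lt1 le2]]]; apply/esym/eqP/argmaxP.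
have vb : v b = v' b by apply: vv'; rewrite def_s mem_cat inE eqxx orbT.
exists s1, s2; split => //; rewrite -vb.
  by apply/allP => k k1; rewrite -vv' ?(allP lt1) // def_s mem_cat k1.
by apply/allP => k k2; rewrite -vv' ?(allP le2) // def_s mem_cat inE k2 !orbT.
Qed.

Lemma enum_split (T : finType) (t : T) : exists pre post, enum T = pre ++ t :: post.
Proof. by have /splitPr[pre post] := mem_enum T t; exists pre, post. Qed.

Section RankingRun.
Variables (R : realType) (S : finType) (n : nat) (w : S -> R) (eps : R) (x : S -> R).
Local Notation val := (rk_val w eps x).

Definition rk_state := ({set S} * ('I_n -> option S))%type.
Definition rk_init : rk_state := (finset.set0, fun _ => None).

Definition avail (E : 'I_n -> S -> bool) (M : {set S}) (b : 'I_n) : seq S :=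
  [seq k <- enum S | E b k && (k \notin M)].

Definition drop_item (E : 'I_n -> S -> bool) (j : S) : 'I_n -> S -> bool :=
  fun b k => E b k && (k != j).

Lemma rk_stepE E (st : rk_state) b : rk_step E w eps x st b =
  if argmax val (avail E st.1 b) is Some a
  then (a |: st.1, fun b' => if b' == b then Some a else st.2 b') else st.
Proof. by []. Qed.

Lemma foldl_rk_step_matched E (st : rk_state) s :
  st.1 \subset (foldl (rk_step E w eps x) st s).1.
Proof.
elim: s st => [|b s IH] st //=; apply: fintype.subset_trans (IH _).
by rewrite rk_stepE; case: argmax => //= a; apply: finset.subsetUr.
Qed.

Lemma foldl_rk_step_assign E (st : rk_state) s i :
  i \notin s -> (foldl (rk_step E w eps x) st s).2 i = st.2 i.
Proof.
elim: s st => [|b s IH] st //; rewrite inE negb_or => /andP[ib /IH ->].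
by rewrite rk_stepE; case: argmax => //= a; rewrite (negbTE ib).
Qed.

Lemma rk_util_split E i pre post : enum 'I_n = pre ++ i :: post ->
  rk_util E w eps x i =
  oapp val 0 (argmax val (avail E (foldl (rk_step E w eps x) rk_init pre).1 i)).
Proof.
move=> def_e; have := enum_uniq 'I_n.
rewrite def_e cat_uniq /= => /and3P[_ /norP[ipre _] /andP[ipost _]].
rewrite /rk_util /rk_run -/rk_init def_e foldl_cat /= foldl_rk_step_assign //.
rewrite rk_stepE; case: argmax => [a|] /=; first by rewrite eqxx.
by rewrite foldl_rk_step_assign.
Qed.

Variables (E : 'I_n -> S -> bool) (j : S).
Local Notation Ej := (drop_item E j).

Lemma avail_drop_item MA MB d b : j |: MB = d |: MA ->
  avail Ej MB b = [seq k <- avail E MA b | k \notin j |: MB].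
Proof.
move=> eqM; rewrite /avail -filter_predI; apply: eq_filter => k /=.
rewrite /drop_item in_setU1 negb_or.
have [->|kj] := eqVneq k j; first by rewrite !andbF.
have [kMB|kMB] /= := boolP (k \in MB); first by rewrite !andbF.
have : k \notin j |: MB by rewrite in_setU1 negb_or kj kMB.
by rewrite eqM in_setU1 negb_or => /andP[_ ->]; rewrite !andbT.
Qed.

Lemma matched_drop_item s : exists d,
  j |: (foldl (rk_step Ej w eps x) rk_init s).1 =
  d |: (foldl (rk_step E w eps x) rk_init s).1.
Proof.
elim/last_ind: s => [|s b [d IH]]; first by exists j; rewrite /= !finset.setU0.
rewrite !foldl_rcons !rk_stepE (avail_drop_item b IH).
set B := foldl _ rk_init s in IH *; set A := foldl _ rk_init s in IH *.
case hA: (argmax val (avail E A.1 b)) => [a|]; last first.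
  by move/eqP: hA; rewrite argmax_eq_None => /eqP ->; exists d.
have aA : a \notin A.1 by move: (argmax_mem hA); rewrite mem_filter => /andP[/andP[]].
have [aB|aB] := boolP (a \in j |: B.1); last first.
  by rewrite (argmax_filter hA aB) /=; exists d; rewrite finset.setUCA IH finset.setUCA.
have ad : a = d by move: aB; rewrite IH in_setU1 (negbTE aA) orbF => /eqP.
case: argmax => [c|] /=; first by exists c; rewrite finset.setUCA IH ad.
by exists a; rewrite IH ad finset.setUA finset.setUid.
Qed.

Lemma rk_util_drop_item_le i : (forall k, 0 <= val k) ->
  rk_util Ej w eps x i <= rk_util E w eps x i.
Proof.
move=> val_ge0; have [pre [post def_e]] := enum_split i.
rewrite !(rk_util_split _ def_e); have [d eqM] := matched_drop_item pre.
rewrite (avail_drop_item i eqM).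
case hB: argmax => [c|] /=; last by case: argmax.
have /argmax_mem := hB; rewrite mem_filter => /andP[_ cA].
case hA: argmax => [a|] /=; first exact: argmax_max hA _ cA.
by move: cA; move/eqP: hA; rewrite argmax_eq_None => /eqP->.
Qed.

Lemma rk_matched_of_util_drop_item i : E i j -> rk_util Ej w eps x i < val j ->
  j \in (rk_run E w eps x).1.
Proof.
move=> Eij; have [pre [post def_e]] := enum_split i.
rewrite (rk_util_split _ def_e).
set A := foldl (rk_step E w eps x) rk_init pre; have [d eqM] := matched_drop_item pre.
have run_A : rk_run E w eps x = foldl (rk_step E w eps x) (rk_step E w eps x A i) post.
  by rewrite /rk_run def_e foldl_cat.
have [jA1|jA1] := boolP (j \in (rk_step E w eps x A i).1).
  by move=> _; rewrite run_A; apply: fintype.subsetP jA1; apply: foldl_rk_step_matched.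
have jA : j \notin A.1.
  by apply: contra jA1; rewrite rk_stepE; case: argmax => //= a ja; rewrite in_setU1 ja orbT.
have jav : j \in avail E A.1 i by rewrite mem_filter Eij jA mem_enum.
case hA: (argmax val (avail E A.1 i)) => [a|]; last first.
  by move/eqP: hA; rewrite argmax_eq_None => /eqP hA; rewrite hA in jav.
have aj : a != j by apply: contra jA1 => /eqP <-; rewrite rk_stepE hA setU11.
have aA : a \notin A.1 by move: (argmax_mem hA); rewrite mem_filter => /andP[/andP[]].
have dj : d = j.
  by apply/eqP; move: (setU11 j (foldl (rk_step Ej w eps x) rk_init pre).1);
     rewrite eqM in_setU1 (negbTE jA) orbF eq_sym.
rewrite (avail_drop_item i eqM) (argmax_filter hA) /=; last first.
  by rewrite eqM dj in_setU1 negb_or aj.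
by rewrite ltNge (argmax_max hA jav).
Qed.

End RankingRun.

Section DropItemIndependence.
Variables (R : realType) (S : finType) (n : nat) (w : S -> R) (eps : R).
Variables (E : 'I_n -> S -> bool) (j : S) (x x' : S -> R).
Hypothesis eq_x : forall k, k != j -> x k = x' k.
Local Notation Ej := (drop_item E j).

Lemma avail_drop_item_neq M b k : k \in avail Ej M b -> k != j.
Proof. by rewrite mem_filter /drop_item => /andP[/andP[/andP[]]]. Qed.

Lemma argmax_avail_drop_item M b :
  argmax (rk_val w eps x) (avail Ej M b) = argmax (rk_val w eps x') (avail Ej M b).
Proof.
by apply: eq_in_argmax => k /avail_drop_item_neq kj; rewrite /rk_val eq_x.
Qed.

Lemma foldl_rk_step_drop_item (st : rk_state S n) s :
  foldl (rk_step Ej w eps x) st s = foldl (rk_step Ej w eps x') st s.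
Proof.
elim: s st => [|b s IH] st //=.
by rewrite IH !rk_stepE argmax_avail_drop_item.
Qed.

Lemma rk_util_drop_item_eq i : rk_util Ej w eps x i = rk_util Ej w eps x' i.
Proof.
have [pre [post def_e]] := enum_split i.
rewrite (rk_util_split w eps x Ej def_e) (rk_util_split w eps x' Ej def_e).
rewrite foldl_rk_step_drop_item argmax_avail_drop_item.
case h: argmax => [k|] //=; rewrite /rk_val eq_x //.
exact: avail_drop_item_neq (argmax_mem h).
Qed.

End DropItemIndependence.

Section MeasurableFibers.
Local Open Scope classical_set_scope.
Variables (d : measure_display) (T : measurableType d).

Definition measurable_fibers (V : finType) (f : T -> V) :=
  forall v, measurable (f @^-1` [set v]).

Lemma measurable_fibers_cst (V : finType) (v0 : V) : measurable_fibers (fun=> v0).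
Proof. by move=> v; rewrite preimage_cst; case: ifPn. Qed.

Lemma preimage_bind (V : finType) (W : Type) (f : T -> V) (g : V -> T -> W) (A : set W) :
  (fun t => g (f t) t) @^-1` A = \bigcup_(v in [set: V]) (f @^-1` [set v] `&` g v @^-1` A).
Proof.
apply/seteqP; split => [t /= gA|t [v _ [/= <- //]]].
by exists (f t) => //.
Qed.

Lemma measurable_fibers_bind (V W : finType) (f : T -> V) (g : V -> T -> W) :
  measurable_fibers f -> (forall v, measurable_fibers (g v)) ->
  measurable_fibers (fun t => g (f t) t).
Proof.
move=> mf mg u; rewrite preimage_bind.
apply: fin_bigcup_measurable => [|v _]; first exact: finite_finset.
by apply: measurableI; [exact: mf | exact: mg].
Qed.

Lemma measurable_fun_bind (V : finType) d' (Y : measurableType d')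
    (f : T -> V) (g : V -> T -> Y) :
  measurable_fibers f -> (forall v, measurable_fun setT (g v)) ->
  measurable_fun setT (fun t => g (f t) t).
Proof.
move=> mf mg _ A mA; rewrite setTI preimage_bind.
apply: fin_bigcup_measurable => [|v _]; first exact: finite_finset.
by apply: measurableI; [exact: mf | rewrite -[_ @^-1` _]setTI; exact: mg].
Qed.

Lemma measurable_fibers_comp (V W : finType) (f : T -> V) (h : V -> W) :
  measurable_fibers f -> measurable_fibers (fun t => h (f t)).
Proof.
move=> mf; apply: (measurable_fibers_bind (g := fun v _ => h v)) => // v.
exact: measurable_fibers_cst.
Qed.

Lemma measurable_fibers_bool (c : T -> bool) :
  measurable_fun setT c -> measurable_fibers c.
Proof. by move=> mc v; rewrite -[_ @^-1` _]setTI; exact: mc. Qed.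

End MeasurableFibers.

Section RankingMeasurable.
Local Open Scope classical_set_scope.
Variables (R : realType) (S : finType) (n : nat) (w : S -> R) (eps : R).
Variables (d : measure_display) (T : measurableType d) (p : T -> S -> R).
Hypothesis measurable_p : forall k, measurable_fun setT (fun t => p t k).

Lemma measurable_rk_val k : measurable_fun setT (fun t => rk_val w eps (p t) k).
Proof.
apply: measurable_funM => //; apply: measurable_funB => //.
apply: measurableT_comp; first exact: measurable_expR.
by apply: measurable_funB => //; apply: measurable_funB.
Qed.

Lemma measurable_fibers_argmax (s : seq S) :
  measurable_fibers (fun t => argmax (rk_val w eps (p t)) s).
Proof.
suff: forall o : T -> option S, measurable_fibers o ->
    measurable_fibers (fun t => foldl (argmax_step (rk_val w eps (p t))) (o t) s).
  by apply; exact: measurable_fibers_cst.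
elim: s => [|k s IH] o mo //=; apply: IH.
apply: (measurable_fibers_bind (f := o)
  (g := fun o' t => argmax_step (rk_val w eps (p t)) o' k)) => // -[b|] /=.
  apply: (@measurable_fibers_comp _ _ _ _
    (fun t => rk_val w eps (p t) b < rk_val w eps (p t) k)
    (fun c => if c then Some k else Some b)).
  by apply: measurable_fibers_bool; apply: measurable_fun_ltr; exact: measurable_rk_val.
exact: measurable_fibers_cst.
Qed.

(* [rk_state] is not a finite type (its second component is a function); its
   image in a finite type lets measurability be checked fibre by fibre. *)
Definition rk_state_enc (st : rk_state S n) : {set S} * {ffun 'I_n -> option S} :=
  (st.1, [ffun b => st.2 b]).

Definition rk_step_enc b (st : {set S} * {ffun 'I_n -> option S}) (o : option S) :=
  if o is Some a then (a |: st.1, [ffun b' => if b' == b then Some a else st.2 b'])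
  else st.

Lemma rk_state_enc_step E x st b : rk_state_enc (rk_step E w eps x st b) =
  rk_step_enc b (rk_state_enc st) (argmax (rk_val w eps x) (avail E st.1 b)).
Proof.
rewrite rk_stepE; case: argmax => [a|] //=.
by congr pair; apply/ffunP => b'; rewrite !ffunE.
Qed.

Lemma measurable_fibers_rk_run E :
  measurable_fibers (fun t => rk_state_enc (rk_run E w eps (p t))).
Proof.
suff: forall st : T -> rk_state S n, measurable_fibers (rk_state_enc \o st) ->
    forall s, measurable_fibers
      (fun t => rk_state_enc (foldl (rk_step E w eps (p t)) (st t) s)).
  by apply; exact: measurable_fibers_cst.
move=> st mst s; elim: s st mst => [|b s IH] st mst //=; apply: IH => /=.
under [X in measurable_fibers X]funext => t do rewrite /= rk_state_enc_step.
apply: (measurable_fibers_bind (f := rk_state_enc \o st)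
  (g := fun v t => rk_step_enc b v (argmax (rk_val w eps (p t)) (avail E v.1 b)))) => // v.
exact: (measurable_fibers_comp _ (measurable_fibers_argmax _)).
Qed.

Lemma measurable_rk_objective (E : 'I_n -> S -> bool) j (i : 'I_n) :
  measurable_fun setT (fun t => rk_rev E w eps (p t) j + rk_util E w eps (p t) i).
Proof.
pose g (v : {set S} * {ffun 'I_n -> option S}) t :=
  (if j \in v.1 then w j * expR (p t j - 1 - eps) else 0) +
  oapp (rk_val w eps (p t)) 0 (v.2 i).
have -> : (fun t => rk_rev E w eps (p t) j + rk_util E w eps (p t) i) =
    (fun t => g (rk_state_enc (rk_run E w eps (p t))) t).
  by apply: funext => t; rewrite /g /= ffunE.
apply: measurable_fun_bind; first exact: measurable_fibers_rk_run.
move=> v; apply: measurable_funD; last by case: (v.2 i) => [k|] //; exact: measurable_rk_val.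
case: (j \in v.1) => //; apply: measurable_funM => //.
apply: measurableT_comp; first exact: measurable_expR.
by apply: measurable_funB => //; apply: measurable_funB.
Qed.

End RankingMeasurable.

Section IteratedUniform.
Local Open Scope classical_set_scope.
Local Open Scope ereal_scope.
Variables (R : realType) (S : finType).
Local Notation mu := (@lebesgue_measure R).
Local Notation I01 := (`[0%R, 1%R] : set R).

Definition set_coord (y : S -> R) (a : S) (t : R) : S -> R :=
  fun k => if k == a then t else y k.

Definition unit_cube (y : S -> R) := forall k, (0 <= y k <= 1)%R.

(* Measurability for the product sigma-algebra on [S -> R], phrased without
   constructing that sigma-algebra. *)
Definition measurable_in_coords d' (Y : measurableType d') (f : (S -> R) -> Y) :=
  forall d (T : measurableType d) (p : T -> S -> R),
  (forall k, measurable_fun setT (fun t => p t k)) -> measurable_fun setT (fun t => f (p t)).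

Lemma set_coordC y a b t s : a != b ->
  set_coord (set_coord y a t) b s = set_coord (set_coord y b s) a t.
Proof.
move=> ab; apply: funext => k; rewrite /set_coord.
by have [->|//] := eqVneq k b; rewrite eq_sym (negbTE ab).
Qed.

Lemma unit_cube_set_coord y a t : unit_cube y -> t \in I01 -> unit_cube (set_coord y a t).
Proof. by move=> hy /set_mem /=; rewrite in_itv /= => ht k; rewrite /set_coord; case: eqP. Qed.

Lemma measurable_set_coord d (T : measurableType d) (p : T -> S -> R) a :
  (forall k, measurable_fun setT (fun t => p t k)) ->
  forall k, measurable_fun setT (fun z : T * R => set_coord (p z.1) a z.2 k).
Proof.
move=> mp k; rewrite /set_coord; case: eqP => _; first exact: measurable_snd.
exact: measurableT_comp (mp k) measurable_fst.
Qed.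

Lemma integral_itv01_cst (r : \bar R) : \int[mu]_(t in I01) r = r.
Proof.
rewrite (@integral_cst _ _ _ mu _ (measurable_itv _) r).
by rewrite [X in _ * X]lebesgue_measure_itv /= lte_fin ltr01 oppr0 adde0 mule1.
Qed.

Lemma eq_in_iter_unif_exp (f g : (S -> R) -> R) l y :
  (forall z, unit_cube z -> f z = g z) -> unit_cube y ->
  iter_unif_exp l f y = iter_unif_exp l g y.
Proof.
move=> fg; elim: l y => [|a l IH] y hy /=; first by rewrite fg.
by apply: eq_integral => t ht; apply: IH; exact: unit_cube_set_coord.
Qed.

Variable f : (S -> R) -> R.
Hypotheses (f_ge0 : forall y, (0 <= f y)%R) (mf : measurable_in_coords f).

Lemma iter_unif_exp_ge0 l y : 0 <= iter_unif_exp l f y.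
Proof.
elim: l y => [|a l IH] y /=; first by rewrite lee_fin.
by apply: integral_ge0 => t _; exact: IH.
Qed.

Lemma measurable_in_coords_iter_unif_exp l : measurable_in_coords (iter_unif_exp l f).
Proof.
elim: l => [|a l IH] d T p mp /=; first exact/measurable_EFinP/mf.
pose G := (fun z : T * R => iter_unif_exp l f (set_coord (p z.1) a z.2)) \_ (setT `*` I01).
have mG : measurable_fun setT G.
  apply/(measurable_restrictT _ _).1; first exact: measurableX.
  by apply: measurable_funS (IH _ _ _ (measurable_set_coord a mp)).
have G_ge0 z : 0 <= G z by rewrite /G patchE; case: ifP => // _; exact: iter_unif_exp_ge0.
have := measurable_fun_fubini_tonelli_F (m2 := mu) G mG G_ge0.
congr measurable_fun; apply: funext => t.
rewrite /fubini_F [RHS]integral_mkcond; apply: eq_integral => s _.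
by rewrite /G !patchE /= !in_setX /= in_setT.
Qed.

Lemma integral_itv01_mkcond2 (K : R -> R -> \bar R) :
  \int[mu]_(t in I01) \int[mu]_(s in I01) K t s =
  \int[mu]_t \int[mu]_s ((fun z => K z.1 z.2) \_ (I01 `*` I01)) (t, s).
Proof.
rewrite integral_mkcond; apply: eq_integral => t _; rewrite patchE.
case: ifPn => ht.
  by rewrite integral_mkcond; apply: eq_integral => s _; rewrite !patchE in_setX ht.
by rewrite integral0_eq // => s _; rewrite patchE in_setX (negbTE ht).
Qed.

Lemma iter_unif_exp_swap a b l y : a != b ->
  iter_unif_exp [:: a, b & l] f y = iter_unif_exp [:: b, a & l] f y.
Proof.
move=> ab /=.
rewrite (integral_itv01_mkcond2
  (fun t s => iter_unif_exp l f (set_coord (set_coord y a t) b s))).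
rewrite (integral_itv01_mkcond2
  (fun s t => iter_unif_exp l f (set_coord (set_coord y b s) a t))).
set G := (fun z => _) \_ _.
have mG : measurable_fun setT G.
  apply/(measurable_restrictT _ _).1; first exact: measurableX.
  apply: measurable_funS (measurable_in_coords_iter_unif_exp _ _) => // k.
  rewrite /set_coord; case: eqP => _; first exact: measurable_snd.
  by case: eqP => _; [exact: measurable_fst | exact: measurable_cst].
have G_ge0 z : 0 <= G z by rewrite /G patchE; case: ifP => // _; exact: iter_unif_exp_ge0.
rewrite (fubini_tonelli (m1 := mu) (m2 := mu) G mG G_ge0).
apply: eq_integral => s _; apply: eq_integral => t _.
by rewrite /G !patchE !in_setX /= (set_coordC _ _ _ ab) andbC.
Qed.

Lemma iter_unif_exp_rotate a pre post y : a \notin post ->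
  iter_unif_exp (pre ++ a :: post) f y = iter_unif_exp (pre ++ rcons post a) f y.
Proof.
move=> apost; elim: pre y => [|b pre IH] y; last by apply: eq_integral => t _; exact: IH.
elim: post apost y => [|b post IH] // /norP[ab /IH {}IH] y.
by rewrite iter_unif_exp_swap //; apply: eq_integral => t _; exact: IH.
Qed.

Section LowerBound.
Variables (K : R) (a : S).
Hypothesis K_le : forall z, unit_cube z ->
  K%:E <= \int[mu]_(t in I01) (f (set_coord z a t))%:E.

Lemma iter_unif_exp_rcons_ge l y : unit_cube y -> K%:E <= iter_unif_exp (rcons l a) f y.
Proof.
elim: l y => [|b l IH] y hy; first exact: K_le.
have [K_ge0|K_lt0] := leP 0%R K; last first.
  by apply: le_trans (iter_unif_exp_ge0 _ _); rewrite lee_fin ltW.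
rewrite -(integral_itv01_cst K%:E).
apply: (@ge0_le_integral _ _ _ mu I01 _ (cst K%:E)).
- exact: measurable_itv.
- by move=> t _; rewrite /= lee_fin.
- exact: measurable_cst.
- apply: measurable_funS (measurable_in_coords_iter_unif_exp _ _) => // k.
  by rewrite /set_coord; case: eqP => _; [exact: measurable_id | exact: measurable_cst].
- by move=> t ht; apply: IH; apply: unit_cube_set_coord => //; exact: mem_set.
Qed.

Lemma iter_unif_exp_ge l y : a \in l -> uniq l -> unit_cube y -> K%:E <= iter_unif_exp l f y.
Proof.
case/splitPr=> pre post; rewrite cat_uniq /= => /and3P[_ _ /andP[apost _]] hy.
by rewrite iter_unif_exp_rotate // -rcons_cat; exact: iter_unif_exp_rcons_ge.
Qed.

End LowerBound.
End IteratedUniform.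

Section ExpIntegral.
Local Open Scope classical_set_scope.
Variable R : realType.
Local Notation mu := (@lebesgue_measure R).

Lemma integral_itv_exp (k a : R) : 0 < a ->
  (\int[mu]_(t in `[0%R, a]) (k * expR t)%:E = (k * expR a - k * expR 0)%:E)%E.
Proof.
move=> a0; have ck : continuous (fun t : R^o => (k * expR t : R^o)).
  move=> z; apply: (@continuousM _ R^o (fun=> k) (@expR R)).
    exact: (@cst_continuous R^o R^o k z).
  exact: continuous_expR.
rewrite EFinB; apply: (@continuous_FTC2 _ _ (fun t => k * expR t)) => //.
- exact: (@continuous_subspaceT R^o R^o _ _ ck).
- split.
  + by move=> z _; exact: ex_derive.
  + by apply/cvg_at_right_filter; exact: ck.
  + by apply/cvg_at_left_filter; exact: ck.
- move=> z _; rewrite derive1Ml; last exact: ex_derive.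
  by rewrite derive1E; have /funeqP -> := @derive_expR R.
Qed.

Lemma measurable_exp_below (k a : R) :
  measurable_fun setT (fun t : R => if t < a then k * expR t else 0).
Proof.
apply: measurable_fun_ifT => //; last exact: measurable_funM.
exact: measurable_fun_ltr.
Qed.

Lemma integral_itv01_exp_below (k a : R) : 0 <= a <= 1 ->
  (\int[mu]_(t in `[0%R, 1%R]) (if t < a then k * expR t else 0)%:E = (k * expR a - k)%:E)%E.
Proof.
case/andP; rewrite le_eqVlt => /predU1P[<- _|a0 a1].
  rewrite expR0 mulr1 subrr integral0_eq // => t /=.
  by rewrite in_itv /= => /andP[t0 _]; rewrite ltNge t0.
transitivity (\int[mu]_(t in `[0%R, a[) (k * expR t)%:E)%E.
  rewrite integral_mkcond [RHS]integral_mkcond; apply: eq_integral => t _.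
  rewrite !patchE !mem_setE !in_itv /=.
  case: (leP 0 t) => //= t0; case: (ltP t a) => [ta|_]; last by case: (t <= 1).
  by rewrite (ltW (lt_le_trans ta a1)).
rewrite (integral_itv_bndo_bndc (f := fun t => (k * expR t)%:E)).
  by rewrite integral_itv_exp // expR0 mulr1.
by apply/measurable_EFinP; apply: measurable_funTS; exact: measurable_funM.
Qed.

End ExpIntegral.

Definition seller_share (R : realType) (eps t : R) : R := expR (t - 1 - eps).

Section Threshold.
Variables (R : realType) (eps : R).
Local Notation g := (seller_share eps).

Lemma seller_shareE t : g t = expR (-1 - eps) * expR t.
Proof. by rewrite /seller_share -expRD; congr expR; lra. Qed.

Lemma seller_share_lt t t' : t < t' -> g t < g t'.
Proof. by move=> tt'; rewrite /seller_share ltr_expR; lra. Qed.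

(* The witness is [a = 1] if [u < c (1 - g 1)], [a = 0] if [c (1 - g 0) <= u],
   and otherwise the solution of [c (1 - g a) = u]. *)
Lemma seller_share_threshold (u c : R) : 0 < eps -> 0 <= u -> 0 <= c ->
  exists a, [/\ 0 <= a <= 1, forall t, 0 <= t -> t < a -> u < c * (1 - g t) &
                (1 - (expR 1)^-1 - eps) * c <= u + (c * g a - c * g 0)].
Proof.
move=> eps_gt0 u_ge0 c_ge0.
set q := expR (-1 : R); set y := expR (- eps).
have q_gt0 : 0 < q by exact: expR_gt0.
have q_lt1 : q < 1 by rewrite /q expR_lt1; lra.
have y_gt0 : 0 < y by exact: expR_gt0.
have y_le1 : y <= 1 by rewrite /y expR_le1 oppr_le0 ltW.
have y_ge : 1 - eps <= y by have := expR_ge1Dx (- eps); rewrite /y; lra.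
have -> : (expR 1)^-1 = q by rewrite /q expRN.
have g0 : g 0 = q * y by rewrite /seller_share /q /y -expRD; congr expR; lra.
have g1 : g 1 = y by rewrite /seller_share /y; congr expR; lra.
have [u_lt|u_ge] := ltP u (c * (1 - y)).
  exists 1; split; first by rewrite ler01 lexx.
    move=> t _ t1; have /(ler_wpM2l c_ge0) : g t <= y by rewrite -g1 ltW // seller_share_lt.
    lra.
  rewrite g1 g0.
  have h1 : 0 <= c * ((y - 1 + eps) * (1 - q)) by apply: mulr_ge0 => //; apply: mulr_ge0; lra.
  have h2 : 0 <= c * (eps * q) by apply: mulr_ge0 => //; apply: mulr_ge0; lra.
  nra.
have cqy : 0 <= c * (q * (1 - y)) by apply: mulr_ge0 => //; apply: mulr_ge0; lra.
have ce : 0 <= c * eps by apply: mulr_ge0 => //; lra.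
have [u_ge'|u_lt'] := leP (c * (1 - q * y)) u.
  exists 0; split; first by rewrite lexx ler01.
    by move=> t t0 /(le_lt_trans t0); rewrite ltxx.
  nra.
have c_gt0 : 0 < c.
  by rewrite lt_neqAle c_ge0 andbT; apply: contraTneq u_lt' => <-; rewrite mul0r -leNgt.
set r := 1 - u / c.
have cr : c * r = c - u by rewrite /r mulrBr mulr1 mulrCA divff ?mulr1 // gt_eqF.
have r_gt : q * y < r by rewrite -(ltr_pM2l c_gt0) cr; nra.
have r_le : r <= y by rewrite -(ler_pM2l c_gt0) cr; nra.
have r_gt0 : 0 < r by apply: lt_trans r_gt; exact: mulr_gt0.
have qyE : q * y = expR (-1 - eps) by rewrite /q /y -expRD.
exists (ln r + 1 + eps).
have ga : g (ln r + 1 + eps) = r.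
  by rewrite /seller_share (_ : ln r + 1 + eps - 1 - eps = ln r) ?lnK ?posrE //; lra.
split.
- apply/andP; split.
    have : ln (q * y) < ln r by rewrite ltr_ln // posrE mulr_gt0.
    by rewrite qyE expRK; lra.
  have : ln r <= ln y by rewrite ler_ln // posrE.
  by rewrite /y expRK; lra.
- move=> t _ /seller_share_lt; rewrite ga => gt.
  have : 0 < c * (r - g t) by apply: mulr_gt0 => //; lra.
  nra.
- by rewrite ga g0; nra.
Qed.

Lemma measurable_seller_share_below (c a : R) :
  measurable_fun setT (fun t : R => if t < a then c * g t else 0).
Proof.
apply: measurable_fun_ifT => //; first exact: measurable_fun_ltr.
apply: measurable_funM => //; apply: measurableT_comp; first exact: measurable_expR.
by apply: measurable_funB => //; apply: measurable_funB.
Qed.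

Lemma integral_itv01_seller_share_below (u c a : R) :
  0 <= u -> 0 <= c -> 0 <= a <= 1 ->
  (\int[lebesgue_measure]_(t in `[0%R, 1%R]) (u + if t < a then c * g t else 0)%:E =
   (u + (c * g a - c * g 0))%:E)%E.
Proof.
move=> u_ge0 c_ge0 a01; set k := c * expR (-1 - eps).
have cgE t : c * g t = k * expR t by rewrite seller_shareE mulrA.
under eq_integral do rewrite cgE EFinD.
rewrite ge0_integralD //; last 2 first.
- by move=> t _; case: ifP => // _; rewrite lee_fin -cgE mulr_ge0 ?expR_ge0.
- by apply/measurable_EFinP; apply: measurable_funTS; exact: measurable_exp_below.
rewrite integral_itv01_cst integral_itv01_exp_below // -EFinD.
by rewrite !cgE expR0 mulr1.
Qed.

End Threshold.

Section RankingGain.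
Local Open Scope classical_set_scope.
Variables (R : realType) (S : finType) (n : nat) (E : 'I_n -> S -> bool).
Variables (w : S -> R) (eps : R) (i : 'I_n) (j : S).
Hypotheses (eps_gt0 : 0 < eps) (w_ge0 : forall k, 0 <= w k) (Eij : E i j).
Local Notation mu := (@lebesgue_measure R).

Definition rk_gain (x : S -> R) := rk_rev E w eps x j + rk_util E w eps x i.

Lemma rk_val_ge0 x k : unit_cube x -> 0 <= rk_val w eps x k.
Proof.
move=> /(_ k)/andP[_ xk1]; rewrite mulr_ge0 // subr_ge0 expR_le1.
by rewrite -addrA -opprD subr_le0 (le_trans xk1) // lerDl ltW.
Qed.

Lemma rk_util_ge0 (E' : 'I_n -> S -> bool) x : unit_cube x -> 0 <= rk_util E' w eps x i.
Proof. by move=> hx; rewrite /rk_util; case: (_.2 i) => // k; exact: rk_val_ge0. Qed.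

Lemma rk_rev_ge0 x : 0 <= rk_rev E w eps x j.
Proof. by rewrite /rk_rev; case: ifP => // _; rewrite mulr_ge0 ?expR_ge0. Qed.

Lemma rk_gain_ge0 x : unit_cube x -> 0 <= rk_gain x.
Proof. by move=> hx; rewrite addr_ge0 ?rk_rev_ge0 ?rk_util_ge0. Qed.

Lemma measurable_in_coords_rk_gain : measurable_in_coords (fun x => Num.max (rk_gain x) 0).
Proof.
move=> d T p mp; apply: measurable_maxr => //.
exact: measurable_rk_objective.
Qed.

Section OtherRanksFixed.
Variable y : S -> R.
Hypothesis y_cube : unit_cube y.
Local Notation u := (rk_util (drop_item E j) w eps y i).
Local Notation c := (w j).
Local Notation g := (seller_share eps).

Lemma rk_gain_set_coord_ge a t : 0 <= t <= 1 -> (t < a -> u < c * (1 - g t)) ->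
  u + (if t < a then c * g t else 0) <= rk_gain (set_coord y j t).
Proof.
move=> t01 ta; set x := set_coord y j t.
have x_cube : unit_cube x by apply: unit_cube_set_coord => //; exact: mem_set.
have xj : x j = t by rewrite /x /set_coord eqxx.
have u_eq : rk_util (drop_item E j) w eps x i = u.
  by apply: rk_util_drop_item_eq => k kj; rewrite /x /set_coord (negbTE kj).
rewrite /rk_gain addrC lerD //; last first.
  by rewrite -u_eq rk_util_drop_item_le // => k; exact: rk_val_ge0.
case: ifP => [/ta u_lt|_]; last exact: rk_rev_ge0.
have j_sold : j \in (rk_run E w eps x).1.
  by apply: rk_matched_of_util_drop_item Eij _; rewrite u_eq /rk_val xj.
by rewrite /rk_rev j_sold xj.
Qed.

Lemma integral_rk_gain_ge :
  (((1 - (expR 1)^-1 - eps) * c)%:E <=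
   \int[mu]_(t in `[0%R, 1%R]) (Num.max (rk_gain (set_coord y j t)) 0)%:E)%E.
Proof.
have u_ge0 : 0 <= u by exact: rk_util_ge0.
have [a [a01 u_lt K_le]] := seller_share_threshold eps_gt0 u_ge0 (w_ge0 j).
apply: (@le_trans _ _ (u + (c * g a - c * g 0))%:E); first by rewrite lee_fin.
rewrite -integral_itv01_seller_share_below //.
apply: (@ge0_le_integral _ _ _ mu _ (measurable_itv _)
  (fun t : R => (u + if t < a then c * g t else 0)%:E)).
- move=> t _; rewrite lee_fin addr_ge0 //.
  by case: ifP => // _; rewrite mulr_ge0 ?expR_ge0.
- apply/measurable_EFinP; apply: measurable_funTS.
  by apply: measurable_funD => //; exact: measurable_seller_share_below.
- apply/measurable_EFinP; apply: measurable_funTS.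
  apply: (measurable_in_coords_rk_gain (p := set_coord y j)) => k.
  by rewrite /set_coord; case: eqP => _; [exact: measurable_id | exact: measurable_cst].
- move=> t /= t01; rewrite lee_fin le_max rk_gain_set_coord_ge //.
  by move=> ta; apply: u_lt => //; move: t01; rewrite in_itv => /andP[].
Qed.

End OtherRanksFixed.
End RankingGain.

Theorem lemma8 (R : realType) (S : finType) (n : nat)
  (E : 'I_n -> S -> bool) (w : S -> R) (eps : R)
  (heps : 0 < eps) (hw : forall j, 0 <= w j)
  (i : 'I_n) (j : S) (hij : E i j) :
  (((1 - (expR 1)^-1 - eps) * w j)%:E <=
   unif_exp (fun x : S -> R => (rk_rev E w eps x j + rk_util E w eps x i)%R))%E.
Proof.
(* Tonelli needs a nonnegative integrand, and [rk_gain] is nonnegative only on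
   the unit cube. *)
have cube0 : unit_cube (fun _ : S => 0 : R) by move=> k; rewrite lexx ler01.
rewrite /unif_exp
  (@eq_in_iter_unif_exp _ _ _ (fun x => Num.max (rk_gain E w eps i j x) 0)) //.
  apply: iter_unif_exp_ge (mem_enum S j) (enum_uniq S) cube0.
  - by move=> x; rewrite le_max lexx orbT.
  - exact: measurable_in_coords_rk_gain.
  - exact: integral_rk_gain_ge.
by move=> x hx; rewrite max_l // rk_gain_ge0.
Qed.
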